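(* $\mathfrak{L}(\mathbb{Q}^+) \subsetneq \mathfrak{L}(SL(2,\mathbb{Q}))$.
   Context: For a group $G$ with identity $e$, a $G$-automaton is a tuple $(Q,\Sigma,G,\delta,q_0,Q_a)$ where $Q$ is a finite set of states, $\Sigma$ a finite input alphabet, $q_0\in Q$ the initial state, $Q_a\subseteq Q$ the accepting states, and $\delta$ assigns to each $(q,\sigma)\in Q\times(\Sigma\cup\{\varepsilon\})$ a finite set of pairs $(q',m)\in Q\times G$. The register holds an element of $G$, initially $e$; using a transition $(q',m)\in\delta(q,\sigma)$ the automaton reads $\sigma$ (or nothing), moves to $q'$ and replaces the register content $x$ by $xm$. A word is accepted if some computation reads it entirely and ends in an accepting state with register equal to $e$. $\mathfrak{L}(G)$ is the class of languages recognized by $G$-automata. $\mathbb{Q}^+$ is the multiplicative group of positive rationals; $SL(2,\mathbb{Q})$ is the group of $2\times2$ rational matrices of determinant $1$. *)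

From HB Require Import structures.
From mathcomp Require Import all_boot all_order all_algebra.
Set Implicit Arguments. Unset Strict Implicit. Unset Printing Implicit Defensive.
Import Order.TTheory GRing.Theory Num.Theory.
Local Open Scope ring_scope.

(* A G-automaton, where the group G is given as a subgroup (predicate) of the
   multiplicative monoid of a ring M; the register lives in M, starts at 1 and
   every transition label is required to lie in G (so the register stays in G
   and multiplication is the group multiplication of G). *)
Record gaut (M : eqType) (Sigma : eqType) := GAut {
  state : finType;
  init : state;
  acc : pred state;
  trans : seq (state * option Sigma * state * M)
}.

Inductive run (M : nzRingType) (Sigma : eqType) (A : gaut M Sigma)
  : state A -> seq Sigma -> state A -> M -> Prop :=
| run_nil p : @run M Sigma A p [::] p 1
| run_read p a p' m w q x :
    (p, Some a, p', m) \in @trans M Sigma A ->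
    @run M Sigma A p' w q x -> @run M Sigma A p (a :: w) q (m * x)
| run_eps p p' m w q x :
    (p, None, p', m) \in @trans M Sigma A ->
    @run M Sigma A p' w q x -> @run M Sigma A p w q (m * x).

Definition accepts (M : nzRingType) (Sigma : eqType) (A : gaut M Sigma)
  (w : seq Sigma) : Prop :=
  exists q, @run M Sigma A (@init M Sigma A) w q 1 /\ @acc M Sigma A q.

Definition is_gaut (M : nzRingType) (G : pred M) (Sigma : eqType)
  (A : gaut M Sigma) : Prop :=
  forall t, t \in @trans M Sigma A -> G t.2.

Definition in_LG (M : nzRingType) (G : pred M) (Sigma : finType)
  (L : seq Sigma -> Prop) : Prop :=
  exists A : gaut M Sigma, is_gaut G A /\ forall w, L w <-> accepts A w.

Definition Qpos : pred rat := fun q => 0 < q.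

Definition SL2Q : pred 'M[rat]_2 := fun A => \det A == 1.

From mathcomp Require Import all_boot all_order all_algebra.
From mathcomp Require Import zify ring lra.
Set Implicit Arguments. Unset Strict Implicit. Unset Printing Implicit Defensive.
Import Order.TTheory GRing.Theory Num.Theory.
Local Open Scope ring_scope.

(* The embedding q |-> diag(q, q^-1) of Q^+ into SL(2,Q) is a monoid morphism
   whose only preimage of 1 is 1, so relabelling the transitions of a
   Q^+-automaton along it preserves the language.

   Strictness is witnessed by the even palindromes u (rev u) over {a, b}.  Over
   SL(2,Q) an automaton reads u multiplying by the free generators
   [[1,2],[0,1]] and [[1,0],[2,1]], guesses the middle, and reads the rest
   multiplying by their inverses; by ping-pong the register returns to 1 exactly
   when the second half is the reverse of the first.  Over a commutative register
   no automaton works: feed it u (rev u) with u = b (a b) (a a b) ... made of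
   m = 2|Q| distinct blocks; the run visits some state at three of the m + 1
   block boundaries i < j < k, and swapping the loops u[i,j) and u[j,k) gives
   an accepted word with the same register value that is no longer an even
   palindrome. *)

Section Runs.
Variables (M : nzRingType) (Sigma : eqType) (A : gaut M Sigma).

Lemma run_cat p w1 r x1 w2 q x2 :
  run (A:=A) p w1 r x1 -> run (A:=A) r w2 q x2 ->
  run (A:=A) p (w1 ++ w2) q (x1 * x2).
Proof.
elim=> [p0 | p0 a p' m w r0 x tr _ IH | p0 p' m w r0 x tr _ IH] R2.
- by rewrite mul1r.
- by rewrite -mulrA; apply: run_read tr (IH R2).
- by rewrite -mulrA; apply: run_eps tr (IH R2).
Qed.

Lemma run_catP p w1 w2 q x : run (A:=A) p (w1 ++ w2) q x ->
  exists r x1 x2,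
    [/\ run (A:=A) p w1 r x1, run (A:=A) r w2 q x2 & x = x1 * x2].
Proof.
move Ew : (w1 ++ w2) => w R; elim: R w1 Ew => {p w q x}
  [p | p a p' m w q x tr R IH | p p' m w q x tr R IH] w1 Ew.
- case: w1 Ew => [|//] /= ->.
  by exists p, 1, 1; rewrite mulr1; split=> //; exact: run_nil.
- case: w1 Ew => [|b w1] /= Ew.
    exists p, 1, (m * x); rewrite mul1r Ew.
    by split=> //; [exact: run_nil | exact: run_read tr R].
  case: Ew => -> /IH [r [x1 [x2 [R1 R2 ->]]]].
  by exists r, (m * x1), x2; rewrite mulrA; split=> //; exact: run_read tr R1.
- have [r [x1 [x2 [R1 R2 ->]]]] := IH w1 Ew.
  by exists r, (m * x1), x2; rewrite mulrA; split=> //; exact: run_eps tr R1.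
Qed.

Lemma run_bigcatP (ws : nat -> seq Sigma) n p w q x :
  run (A:=A) p (\big[cat/[::]]_(0 <= i < n) ws i ++ w) q x ->
  exists (st : nat -> state A) (v : nat -> M) y,
    [/\ st 0%N = p,
        forall i, (i < n)%N -> run (A:=A) (st i) (ws i) (st i.+1) (v i),
        run (A:=A) (st n) w q y
      & x = \prod_(0 <= i < n) v i * y].
Proof.
elim: n w q x => [|n IH] w q x.
  rewrite big_geq // => R; exists (fun=> p), (fun=> 1), x.
  by rewrite big_geq // mul1r.
rewrite big_nat_recr //= -catA.
move=> /IH [st [v [y [st0 Rws /run_catP [r [y1 [y2 [R1 R2 ->]]]] ->]]]].
exists (fun i => if i == n.+1 then r else st i).
exists (fun i => if i == n then y1 else v i), y2.
split=> //.
- move=> i; rewrite ltnS leq_eqVlt => /predU1P [-> | lt_in].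
    by rewrite (ltn_eqF (ltnSn n)) !eqxx.
  by rewrite (ltn_eqF (leqW lt_in)) eqSS (ltn_eqF lt_in); exact: Rws.
- by rewrite eqxx.
- rewrite big_nat_recr //= eqxx mulrA; congr (_ * _ * _).
  by apply: eq_big_nat => i /andP [_ /ltn_eqF ->].
Qed.

Lemma run_bigcat (ws : nat -> seq Sigma) (st : nat -> state A) (v : nat -> M) n :
  (forall i, (i < n)%N -> run (A:=A) (st i) (ws i) (st i.+1) (v i)) ->
  forall a b, (a <= b <= n)%N ->
  run (A:=A) (st a) (\big[cat/[::]]_(a <= i < b) ws i) (st b)
    (\prod_(a <= i < b) v i).
Proof.
move=> Rws a; elim=> [|b IH] /andP [le_ab le_bn].
  by move: le_ab; rewrite leqn0 => /eqP ->; rewrite !big_geq //; exact: run_nil.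
move: le_ab; rewrite leq_eqVlt => /predU1P [-> | lt_ab].
  by rewrite !big_geq //; exact: run_nil.
rewrite !big_nat_recr //=; apply: run_cat (Rws _ le_bn).
by apply: IH; rewrite -ltnS lt_ab ltnW.
Qed.

End Runs.

Lemma run_swap_loops (M : comNzRingType) (Sigma : eqType) (A : gaut M Sigma)
    p s q w0 w1 w2 w3 x0 x1 x2 x3 :
  run (A:=A) p w0 s x0 -> run (A:=A) s w1 s x1 -> run (A:=A) s w2 s x2 ->
  run (A:=A) s w3 q x3 ->
  run (A:=A) p (w0 ++ w2 ++ w1 ++ w3) q (x0 * x1 * x2 * x3).
Proof.
move=> R0 R1 R2 R3; have := run_cat R0 (run_cat R2 (run_cat R1 R3)).
by rewrite !mulrA (mulrAC x0).
Qed.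

Section MorphicImage.
Variables (M N : nzRingType) (f : M -> N).
Hypotheses (f_monoid : monoid_morphism f) (f_eq1 : forall x, f x = 1 -> x = 1).

Definition gaut_map (Sigma : eqType) (A : gaut M Sigma) : gaut N Sigma :=
  GAut (init A) (@acc _ _ A) [seq (t.1, f t.2) | t <- trans A].

Variables (Sigma : eqType) (A : gaut M Sigma).

Lemma mem_trans_map t : t \in trans A -> (t.1, f t.2) \in trans (gaut_map A).
Proof. exact: map_f. Qed.

Lemma run_map p w q x : run (A:=A) p w q x -> run (A:=gaut_map A) p w q (f x).
Proof.
case: f_monoid => f1 fM.
elim=> [p0 | p0 a p' m w0 q0 x0 tr _ IH | p0 p' m w0 q0 x0 tr _ IH]; rewrite ?f1 ?fM.
- exact: run_nil.
- exact: run_read (mem_trans_map tr) IH.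
- exact: run_eps (mem_trans_map tr) IH.
Qed.

Lemma run_mapP p w q X : run (A:=gaut_map A) p w q X ->
  exists2 x, run (A:=A) p w q x & X = f x.
Proof.
case: f_monoid => f1 fM.
elim=> [p0 | p0 a p' m w0 q0 x0 tr _ [x R ->] | p0 p' m w0 q0 x0 tr _ [x R ->]].
- by exists 1; [exact: run_nil | rewrite f1].
- case/mapP: tr => -[t0 m0] tr [Et ->]; subst t0.
  by exists (m0 * x); [exact: run_read tr R | rewrite fM].
- case/mapP: tr => -[t0 m0] tr [Et ->]; subst t0.
  by exists (m0 * x); [exact: run_eps tr R | rewrite fM].
Qed.

Lemma accepts_map w : accepts (gaut_map A) w <-> accepts A w.
Proof.
split=> [[q [/run_mapP [x R /esym/f_eq1 x1] acc_q]] | [q [/run_map R acc_q]]].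
  by exists q; rewrite -x1.
by exists q; case: f_monoid R => -> _.
Qed.

End MorphicImage.

Lemma in_LG_map (M N : nzRingType) (f : M -> N) (G : pred M) (H : pred N)
    (Sigma : finType) (L : seq Sigma -> Prop) :
  monoid_morphism f -> (forall x, f x = 1 -> x = 1) -> (forall x, G x -> H (f x)) ->
  in_LG G L -> in_LG H L.
Proof.
move=> f_monoid f_eq1 fGH [A [GA LA]]; exists (gaut_map f A); split.
  by move=> t /mapP [t0 /GA G_t0 ->]; exact: fGH.
by move=> w; rewrite LA accepts_map.
Qed.

Definition even_palindrome (T : Type) (w : seq T) : Prop := exists u, w = u ++ rev u.

Lemma even_palindrome_cat_rev (T : eqType) (x y : seq T) :
  size x = size y -> even_palindrome (x ++ rev y) -> x = y.
Proof.
move=> size_xy [u E]; have size_ux : size u = size x.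
  by have := congr1 size E; rewrite !size_cat !size_rev size_xy; lia.
move/eqP: E; rewrite eqseq_cat; last by rewrite size_ux.
by case/andP => /eqP -> /eqP/(can_inj revK) ->.
Qed.

Section Palindromes.
Variables (R : unitRingType) (Sigma : finType) (g : Sigma -> R).
Hypothesis g_unit : forall a, g a \is a GRing.unit.

Definition pal_trans : seq (bool * option Sigma * bool * R) :=
  [seq (false, Some a, false, g a) | a <- enum Sigma] ++
  (false, None, true, 1) :: [seq (true, Some a, true, (g a)^-1) | a <- enum Sigma].

Definition pal_gaut : gaut R Sigma := @GAut _ _ bool false idfun pal_trans.

Lemma pal_trans_read p a p' m : (p, Some a, p', m) \in pal_trans ->
  p' = p /\ m = if p then (g a)^-1 else g a.
Proof.
rewrite mem_cat inE.
by case/or3P=> [/mapP [b _ [-> -> -> ->]] | /eqP [] | /mapP [b _ [-> -> -> ->]]].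
Qed.

Lemma pal_trans_eps p p' m : (p, None, p', m) \in pal_trans ->
  [/\ p = false, p' = true & m = 1].
Proof.
by rewrite mem_cat inE => /or3P [/mapP [b _ []] | /eqP [-> -> ->] | /mapP [b _ []]].
Qed.

Lemma pal_runP p w q x : run (A:=pal_gaut) p w q x ->
  if p then q = true /\ x = \prod_(a <- w) (g a)^-1
  else (q = false /\ x = \prod_(a <- w) g a) \/
       (q = true /\ exists u v,
          w = u ++ v /\ x = \prod_(a <- u) g a * \prod_(a <- v) (g a)^-1).
Proof.
elim=> [[] | p0 a p' m w0 q0 x0 /pal_trans_read [-> ->] _ IH
           | p0 p' m w0 q0 x0 /pal_trans_eps [-> -> ->] _ IH].
- by rewrite big_nil.
- by left; rewrite big_nil.
- case: p0 IH => [[-> ->] | [[-> ->] | [-> [u [v [-> ->]]]]]]; rewrite ?big_cons //.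
    by left.
  by right; split=> //; exists (a :: u), v; rewrite big_cons mulrA.
- by case: IH => -> ->; right; split=> //; exists [::], w0; rewrite big_nil mul1r.
Qed.

Lemma run_pal_left u : run (A:=pal_gaut) false u false (\prod_(a <- u) g a).
Proof.
elim: u => [|a u IH]; first by rewrite big_nil; apply: run_nil.
by rewrite big_cons; apply: run_read IH; rewrite mem_cat map_f ?mem_enum.
Qed.

Lemma run_pal_right v : run (A:=pal_gaut) true v true (\prod_(a <- v) (g a)^-1).
Proof.
elim: v => [|a v IH]; first by rewrite big_nil; apply: run_nil.
by rewrite big_cons; apply: run_read IH; rewrite mem_cat !inE map_f ?mem_enum ?orbT.
Qed.

Lemma prod_g_unit s : \prod_(a <- s) g a \is a GRing.unit.
Proof. exact: unitr_prod. Qed.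

Lemma prod_inv_rev v : \prod_(a <- v) (g a)^-1 = (\prod_(a <- rev v) g a)^-1.
Proof. by rewrite rev_prodrV // rev_prodr. Qed.

Hypothesis g_free : injective (fun u => \prod_(a <- u) g a).

Lemma pal_gaut_accepts w : accepts pal_gaut w <-> even_palindrome w.
Proof.
split=> [[q [/pal_runP /= [[-> //] | [_ [u [v [-> uv1]]]]] _]] | [u ->]].
  exists u; congr (_ ++ _); apply: (canRL revK); apply: g_free.
  by rewrite -[RHS](divrK (prod_g_unit (rev v))) -prod_inv_rev -uv1 mul1r.
have eps : (false, None, true, 1) \in trans pal_gaut.
  by rewrite mem_cat !inE eqxx orbT.
exists true; split=> //.
have := run_cat (run_pal_left u) (run_eps eps (run_pal_right (rev u))).
by rewrite mul1r prod_inv_rev revK mulrV ?prod_g_unit.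
Qed.

Lemma in_LG_even_palindrome (G : pred R) :
  G 1 -> (forall a, G (g a)) -> (forall a, G (g a)^-1) ->
  in_LG G (@even_palindrome Sigma).
Proof.
move=> G1 Gg Gginv; exists pal_gaut; split=> [t | w]; last by rewrite pal_gaut_accepts.
rewrite mem_cat inE.
by case/or3P=> [/mapP [a _ ->] | /eqP -> | /mapP [a _ ->]]; rewrite /= ?Gg.
Qed.

End Palindromes.

Lemma count_fibers (T : finType) (f : nat -> T) (s : seq nat) :
  \sum_(t : T) count (fun i => f i == t) s = size s.
Proof.
elim: s => [|x s IH] /=; first by rewrite big1.
rewrite big_split /= IH (bigD1 (f x)) //= eqxx big1 // => t.
by rewrite eq_sym => /negbTE ->.
Qed.

Lemma pigeonhole3 (T : finType) (f : nat -> T) m : (2 * #|T| <= m)%N ->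
  exists i j k, [/\ (i < j < k)%N, (k <= m)%N, f i = f j & f j = f k].
Proof.
move=> Tm; have [t fiber_t] : exists t, (2 < count (fun i => f i == t) (iota 0 m.+1))%N.
  apply/existsP; apply: contraLR Tm; rewrite negb_exists -ltnNge => /forallP small.
  rewrite -[m.+1](size_iota 0) -(count_fibers f) mulnC -sum_nat_const.
  by apply: leq_sum => t _; rewrite leqNgt small.
set s := filter (fun i => f i == t) (iota 0 m.+1).
have s_sorted : sorted ltn s := sorted_filter ltn_trans _ (iota_ltn_sorted 0 m.+1).
have s_fiber n : (n < size s)%N -> f (nth 0 s n) = t /\ (nth 0 s n <= m)%N.
  by move=> /(mem_nth 0); rewrite mem_filter mem_iota => /andP [/eqP -> /andP [_]].
have lt_s := sorted_ltn_nth ltn_trans 0 s_sorted.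
rewrite -size_filter -/s in fiber_t.
have [f0 _] := s_fiber 0 (ltnW (ltnW fiber_t)).
have [f1 _] := s_fiber 1 (ltnW fiber_t).
have [f2 le2m] := s_fiber 2 fiber_t.
exists (nth 0 s 0), (nth 0 s 1), (nth 0 s 2); split; rewrite ?f0 ?f1 ?f2 //.
by rewrite !lt_s // !inE ?(ltnW (ltnW fiber_t)) ?(ltnW fiber_t).
Qed.

Definition block (l : nat) : seq bool := rcons (nseq l false) true.

Definition blocks (a b : nat) : seq bool := \big[cat/[::]]_(a <= l < b) block l.

Lemma nth_block a b s : (b <= a)%N -> nth false (block a ++ s) b = (b == a).
Proof.
move=> le_ba; rewrite cat_rcons nth_cat size_nseq nth_nseq.
by case: ltngtP le_ba => // ->; rewrite subnn.
Qed.

Lemma blocks_cat a b c : (a <= b <= c)%N -> blocks a c = blocks a b ++ blocks b c.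
Proof. by case/andP; exact: big_cat_nat. Qed.

Lemma blocks_neq i j k s1 s2 : (i < j < k)%N -> blocks j k ++ s1 <> blocks i j ++ s2.
Proof.
case/andP=> lt_ij lt_jk /(congr1 (nth false ^~ i)).
rewrite /blocks (big_ltn lt_ij) (big_ltn lt_jk) -!catA.
rewrite !nth_block ?eqxx ?(ltn_eqF lt_ij) //.
exact: ltnW.
Qed.

Lemma even_palindrome_notin_LG (M : comNzRingType) (G : pred M) :
  ~ in_LG G (@even_palindrome bool).
Proof.
case=> A [_ LA]; set m := (2 * #|state A|)%N; set u := blocks 0 m.
have [q [R acc_q]] : accepts A (u ++ rev u) by apply/LA; exists u.
have [st [v [y [st0 Rblock Rrev prod1]]]] := run_bigcatP (ws:=block) R.
have [i [j [k [ijk le_km st_ij st_jk]]]] := pigeonhole3 st (leqnn m).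
have Rseg a b : (a <= b <= m)%N ->
    run (A:=A) (st a) (blocks a b) (st b) (\prod_(a <= l < b) v l).
  exact: run_bigcat Rblock a b.
have [b0i bij bjk bkm] : [/\ (0 <= i <= m)%N, (i <= j <= m)%N,
    (j <= k <= m)%N & (k <= m <= m)%N] by split; apply/andP; split; lia.
have split_u : u = blocks 0 i ++ blocks i j ++ blocks j k ++ blocks k m.
  by rewrite /u (blocks_cat b0i) (blocks_cat bij) (blocks_cat bjk).
set X := blocks 0 i ++ blocks j k ++ blocks i j ++ blocks k m.
have RX : run (A:=A) (st 0%N) (X ++ rev u) q 1.
  have R1 := Rseg i j bij; have R2 := Rseg j k bjk; have R3 := Rseg k m bkm.
  rewrite -st_jk in R2 R3; rewrite -st_ij in R1 R2 R3.
  suff -> : 1 = \prod_(0 <= l < i) v l * \prod_(i <= l < j) v l *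
                 \prod_(j <= l < k) v l * (\prod_(k <= l < m) v l * y).
    rewrite /X -!catA.
    exact: run_swap_loops (Rseg 0%N i b0i) R1 R2 (run_cat R3 Rrev).
  have prod_cat a b c : (a <= b <= c)%N ->
      \prod_(a <= l < c) v l = \prod_(a <= l < b) v l * \prod_(b <= l < c) v l.
    by case/andP; exact: big_cat_nat.
  rewrite [LHS]prod1 (prod_cat _ _ _ b0i) (prod_cat _ _ _ bij).
  by rewrite (prod_cat _ _ _ bjk) !mulrA.
have X_u : X = u.
  apply: even_palindrome_cat_rev; last by apply/LA; exists q; rewrite -st0.
  by rewrite split_u /X !size_cat; lia.
move: X_u; rewrite split_u => /eqP; rewrite eqseq_cat // => /andP [_ /eqP].
exact: blocks_neq ijk.
Qed.

Section Matrices2.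
Variable R : comNzRingType.

Definition mx2 (a b c d : R) : 'M[R]_2 :=
  \matrix_(i, j) if i == 0 then (if j == 0 then a else b) else (if j == 0 then c else d).

Lemma det_mx2 a b c d : \det (mx2 a b c d) = a * d - b * c.
Proof.
rewrite (expand_det_row _ 0) !big_ord_recl big_ord0 /cofactor !det_mx11 !mxE /=.
by rewrite /bump /= !add0n addn0 expr0 expr1; ring.
Qed.

Lemma mul_mx2 a b c d a' b' c' d' :
  mx2 a b c d * mx2 a' b' c' d' =
  mx2 (a * a' + b * c') (a * b' + b * d') (c * a' + d * c') (c * b' + d * d').
Proof.
rewrite -mulmxE; apply/matrixP => i j; rewrite !mxE !big_ord_recl big_ord0 !mxE /=.
by case: i => [[|[|i]] Hi]; case: j => [[|[|j]] Hj]; rewrite //= ?addr0.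
Qed.

Lemma mx2_1 : 1 = mx2 1 0 0 1.
Proof.
by apply/matrixP => i j; rewrite !mxE; case: i => [[|[|i]] Hi]; case: j => [[|[|j]] Hj].
Qed.

Lemma mx2_inj a b c d a' b' c' d' : mx2 a b c d = mx2 a' b' c' d' ->
  [/\ a = a', b = b', c = c' & d = d'].
Proof.
move=> E; have e i j := congr1 (fun A : 'M[R]_2 => A i j) E.
by move: (e 0 0) (e 0 1) (e 1 0) (e 1 1); rewrite !mxE.
Qed.

End Matrices2.

Definition diag_inv (q : rat) : 'M[rat]_2 := mx2 q 0 0 q^-1.

Lemma diag_inv_monoid_morphism : monoid_morphism diag_inv.
Proof.
split; first by rewrite /diag_inv invr1 mx2_1.
by move=> x y; rewrite /diag_inv mul_mx2 invfM; congr mx2; ring.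
Qed.

Lemma diag_inv_eq1 q : diag_inv q = 1 -> q = 1.
Proof. by rewrite mx2_1 => /mx2_inj []. Qed.

Lemma diag_inv_SL2Q q : Qpos q -> SL2Q (diag_inv q).
Proof. by move=> q_gt0; rewrite /SL2Q /diag_inv det_mx2 mulr0 subr0 divff // gt_eqF. Qed.

Section Shears.
Variable R : realDomainType.

Definition shear (e : bool) : 'M[R]_2 := if e then mx2 1 0 2 1 else mx2 1 2 0 1.

Lemma det_shear e : \det (shear e) = 1.
Proof. by case: e; rewrite det_mx2; ring. Qed.

Lemma shear_unit e : shear e \is a GRing.unit.
Proof. by rewrite unitmxE det_shear unitr1. Qed.

Definition nonneg_sl2 (A : 'M[R]_2) : Prop := exists a b c d,
  A = mx2 a b c d /\ [/\ 0 <= a, 0 <= b, 0 <= c, 0 <= d & a * d - b * c = 1].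

Lemma nonneg_sl2_shear_prod u : nonneg_sl2 (\prod_(e <- u) shear e).
Proof.
elim: u => [|e u [a [b [c [d [Eu [a0 b0 c0 d0 det1]]]]]]].
  by rewrite big_nil; exists 1, 0, 0, 1; rewrite -mx2_1; split=> //; split=> //; ring.
rewrite big_cons Eu; case: e; rewrite mul_mx2.
  exists a, b, (2 * a + c), (2 * b + d); split; first by congr mx2; ring.
  by split; [lra | lra | lra | lra | rewrite -det1; ring].
exists (a + 2 * c), (b + 2 * d), c, d; split; first by congr mx2; ring.
by split; [lra | lra | lra | lra | rewrite -det1; ring].
Qed.

Lemma shear_nonneg_sl2_neq1 e A : nonneg_sl2 A -> shear e * A <> 1.
Proof.
case=> [a [b [c [d [-> [a0 b0 c0 d0 _]]]]]].
by rewrite mx2_1; case: e; rewrite mul_mx2 => /mx2_inj []; lra.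
Qed.

Lemma shear_ping_pong A B : nonneg_sl2 A -> nonneg_sl2 B ->
  shear false * A <> shear true * B.
Proof.
case=> [a [b [c [d [-> [a0 b0 c0 d0 _]]]]]].
case=> [a' [b' [c' [d' [-> [a0' b0' c0' d0' det1']]]]]].
rewrite mul_mx2 mul_mx2 => /mx2_inj [Ea _ Ec _].
have [a'0 c'0] : a' = 0 /\ c' = 0 by lra.
by move: det1'; rewrite a'0 c'0 mul0r mulr0 subrr => /eqP; rewrite eq_sym oner_eq0.
Qed.

Lemma shear_prod_inj : injective (fun u => \prod_(e <- u) shear e).
Proof.
move=> /=; elim=> [|e u IH] [|f v]; rewrite ?big_nil ?big_cons //.
- by move/esym/shear_nonneg_sl2_neq1; case; exact: nonneg_sl2_shear_prod.
- by move/shear_nonneg_sl2_neq1; case; exact: nonneg_sl2_shear_prod.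
have [<- /(mulrI (shear_unit e)) /IH -> // | ] := eqVneq e f.
case: e f => [] [] // _ E; exfalso.
  exact: shear_ping_pong (nonneg_sl2_shear_prod v) (nonneg_sl2_shear_prod u) (esym E).
exact: shear_ping_pong (nonneg_sl2_shear_prod u) (nonneg_sl2_shear_prod v) E.
Qed.

End Shears.
Arguments shear {R} e.

Lemma SL2Q_inv (A : 'M[rat]_2) : SL2Q A -> SL2Q A^-1.
Proof. by rewrite /SL2Q => /eqP detA; rewrite det_inv detA invr1. Qed.

Theorem theorem3p12 :
  (forall (Sigma : finType) (L : seq Sigma -> Prop),
      in_LG Qpos L -> in_LG SL2Q L) /\
  (exists (Sigma : finType) (L : seq Sigma -> Prop),
      in_LG SL2Q L /\ ~ in_LG Qpos L).
Proof.
split.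
  move=> Sigma L; apply: in_LG_map diag_inv_monoid_morphism diag_inv_eq1 _.
  exact: diag_inv_SL2Q.
exists bool, (@even_palindrome bool); split; last exact: even_palindrome_notin_LG.
apply: (in_LG_even_palindrome (@shear_unit rat) (@shear_prod_inj rat)) => [|e|e].
- by rewrite /SL2Q -idmxE det1.
- by rewrite /SL2Q det_shear.
- by apply: SL2Q_inv; rewrite /SL2Q det_shear.
Qed.
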